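(* Let $n,k\in\mathbb{N}$, $\alpha\in(0,\infty)$, and let $\vec{d}=(d_1,\dots,d_n)$ be given. (i) Let $Z_{n,1},\dots,Z_{n,n}$ be IID with $P(Z_{n,j}=d)=\frac{\alpha^{\overline{d}}}{d!}\left(\frac{\alpha}{\alpha+k}\right)^{\alpha}\left(\frac{k}{\alpha+k}\right)^{d}$ for $d=0,1,2,\dots$, and $\vec{Z}_n=(Z_{n,1},\dots,Z_{n,n})$. Then $P(\vec{D}_n^{\alpha}=\vec{d})=P(\vec{Z}_n=\vec{d}\mid Z_{n,1}+\cdots+Z_{n,n}=kn)$. (ii) Let $Y_{n,1},\dots,Y_{n,n}$ be IID Poisson random variables with mean $k$ and $\vec{Y}_n=(Y_{n,1},\dots,Y_{n,n})$. Then $P(\vec{D}_n^{\infty}=\vec{d})=P(\vec{Y}_n=\vec{d}\mid Y_{n,1}+\cdots+Y_{n,n}=kn)$.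
   Context: A $k$-out map on $[n]$ is a map $M:[n]\to[n]^k$; the in-degree of vertex $j$ is the total number of coordinates, over all vertices and all $k$ labels, of the images equal to $j$. For $\alpha\in(0,\infty)$, the random $k$-out map $M_{n,k}^{\alpha}$ has law $P(M_{n,k}^{\alpha}=M)=\prod_{j=1}^n \alpha^{\overline{d_j}}/(\alpha n)^{\overline{kn}}$, where $(d_1,\dots,d_n)$ is the in-degree sequence of $M$ and $x^{\overline{y}}=x(x+1)\cdots(x+y-1)$ (it arises from a preferential attachment process where each vertex has initial weight $\alpha$ and each chosen image gains weight $1$). $M_{n,k}^{\infty}$ is the uniformly random $k$-out map on $[n]$. $\vec{D}_n^{\alpha}=(D_{n,1}^{\alpha},\dots,D_{n,n}^{\alpha})$ and $\vec{D}_n^{\infty}$ denote the in-degree sequences of $M_{n,k}^{\alpha}$ and $M_{n,k}^{\infty}$ respectively. *)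

From mathcomp Require Import all_boot all_order all_algebra.
From mathcomp Require Import reals sequences exp.
Set Implicit Arguments. Unset Strict Implicit. Unset Printing Implicit Defensive.
Import Order.TTheory GRing.Theory Num.Theory.
Local Open Scope ring_scope.

(* A k-out map on [n] = 'I_n : each vertex i has k labelled images M i l. *)
Definition kout_map (n k : nat) := {ffun 'I_n -> {ffun 'I_k -> 'I_n}}.

Definition indeg (n k : nat) (M : kout_map n k) (j : 'I_n) : nat :=
  (\sum_(i < n) \sum_(l < k) (M i l == j))%N.

Definition indeg_seq (n k : nat) (M : kout_map n k) : {ffun 'I_n -> nat} :=
  [ffun j => indeg M j].

Definition rising (R : pzRingType) (x : R) (y : nat) : R :=
  \prod_(i < y) (x + i%:R).

Definition P_map_alpha (R : realType) (n k : nat) (alpha : R) (M : kout_map n k) : R :=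
  (\prod_(j < n) rising alpha (indeg M j)) / rising (alpha * n%:R) (k * n).

Definition P_map_unif (R : realType) (n k : nat) (M : kout_map n k) : R :=
  1 / (n%:R ^+ (k * n)).

Definition P_D_alpha (R : realType) (n k : nat) (alpha : R) (d : {ffun 'I_n -> nat}) : R :=
  \sum_(M : kout_map n k | indeg_seq M == d) P_map_alpha alpha M.

Definition P_D_unif (R : realType) (n k : nat) (d : {ffun 'I_n -> nat}) : R :=
  \sum_(M : kout_map n k | indeg_seq M == d) P_map_unif R M.

Definition pmf_Z (R : realType) (k : nat) (alpha : R) (d : nat) : R :=
  rising alpha d / (d`!)%:R * (alpha / (alpha + k%:R)) `^ alpha
    * (k%:R / (alpha + k%:R)) ^+ d.

Definition pmf_Poisson (R : realType) (k : nat) (d : nat) : R :=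
  expR (- k%:R) * k%:R ^+ d / (d`!)%:R.

(* For IID variables X_1..X_n with common pmf p on nat:
   P(X = d) = \prod_j p (d_j), and
   P(X = d | X_1 + ... + X_n = s) = P(X = d, sum X = s) / P(sum X = s),
   where P(sum X = s) = sum over all e in nat^n with sum e = s of \prod_j p (e_j).
   Every such e has entries <= s, so it is enumerated exactly once as a
   finite function 'I_n -> 'I_s.+1. *)
Definition P_iid_vec (R : realType) (p : nat -> R) (n : nat) (d : {ffun 'I_n -> nat}) : R :=
  \prod_(j < n) p (d j).

Definition P_iid_sum (R : realType) (p : nat -> R) (n s : nat) : R :=
  \sum_(e : {ffun 'I_n -> 'I_s.+1} | (\sum_(j < n) (e j : nat))%N == s)
     \prod_(j < n) p (e j).

Definition P_iid_cond (R : realType) (p : nat -> R) (n s : nat) (d : {ffun 'I_n -> nat}) : R :=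
  (if (\sum_(j < n) d j)%N == s then P_iid_vec p d else 0) / P_iid_sum p n s.

(* Every k-out map with in-degree sequence d has the same weight, and there are
   (kn)! / (d_1! ... d_n!) of them, so P(D = d) is that multinomial coefficient
   times prod_j w(d_j) / Z, where w = rising alpha (resp. w = 1) and Z, the sum
   over all maps of prod_j w(in-degrees), is rising (alpha n) (kn) (resp.
   n^(kn)).  Both pmfs have the form c q^e w(e) / e!; conditioning on a total
   of kn cancels the factor c^n q^(kn), and regrouping the maps by their
   in-degree sequences shows that the sum of prod_j w(e_j) / e_j! over the
   compositions e of kn is Z / (kn)!. *)

From mathcomp Require Import all_boot all_order all_algebra.
From mathcomp Require Import reals sequences exp.
From mathcomp Require Import zify ring.
Import Order.TTheory GRing.Theory Num.Theory.
Set Implicit Arguments. Unset Strict Implicit. Unset Printing Implicit Defensive.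

Definition fiber_card (m n : nat) (f : {ffun 'I_m -> 'I_n}) (j : 'I_n) : nat :=
  \sum_(x < m) (f x == j).

Definition fiber_cards (m n : nat) (f : {ffun 'I_m -> 'I_n}) : {ffun 'I_n -> nat} :=
  [ffun j => fiber_card f j].

Definition ffun_cons (m n : nat) (t : 'I_n) (g : {ffun 'I_m -> 'I_n}) :
    {ffun 'I_m.+1 -> 'I_n} :=
  [ffun i => if unlift ord0 i is Some x then g x else t].

Lemma ffun_cons_bij (m n : nat) :
  bijective (fun p : 'I_n * {ffun 'I_m -> 'I_n} => ffun_cons p.1 p.2).
Proof.
exists (fun f : {ffun 'I_m.+1 -> 'I_n} => (f ord0, [ffun x => f (lift ord0 x)])).
  move=> [t g] /=; rewrite !ffunE unlift_none; congr pair.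
  by apply/ffunP => x; rewrite !ffunE liftK.
move=> f; apply/ffunP => i; rewrite !ffunE.
by case: unliftP => [x ->|->]; rewrite ?ffunE.
Qed.

Lemma big_ffun_cons (T : Type) (idx : T) (op : Monoid.com_law idx) (m n : nat)
    (G : {ffun 'I_m.+1 -> 'I_n} -> T) :
  \big[op/idx]_(f : {ffun 'I_m.+1 -> 'I_n}) G f =
  \big[op/idx]_(t : 'I_n) \big[op/idx]_(g : {ffun 'I_m -> 'I_n}) G (ffun_cons t g).
Proof.
rewrite pair_big /= (reindex _ (onW_bij _ (ffun_cons_bij m n))).
by apply: eq_bigr => -[].
Qed.

Lemma fiber_card_cons (m n : nat) (t : 'I_n) (g : {ffun 'I_m -> 'I_n}) (j : 'I_n) :
  fiber_card (ffun_cons t g) j = (t == j) + fiber_card g j.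
Proof.
rewrite /fiber_card big_ord_recl ffunE unlift_none; congr addn.
by apply: eq_bigr => x _; rewrite ffunE liftK.
Qed.

Lemma sum_fiber_card (m n : nat) (f : {ffun 'I_m -> 'I_n}) :
  \sum_(j < n) fiber_card f j = m.
Proof.
rewrite /fiber_card exchange_big /= -[RHS]card_ord -sum1_card.
apply: eq_bigr => x _; rewrite -big_mkcond /=.
by rewrite (eq_bigl (pred1 (f x))) ?big_pred1_eq // => j; rewrite eq_sym.
Qed.

Lemma fiber_card_le (m n : nat) (f : {ffun 'I_m -> 'I_n}) (j : 'I_n) :
  fiber_card f j <= m.
Proof. by rewrite -{2}(sum_fiber_card f) (bigD1 j) //= leq_addr. Qed.

Definition multinom (m n : nat) (d : {ffun 'I_n -> nat}) : nat :=
  #|[pred f : {ffun 'I_m -> 'I_n} | fiber_cards f == d]|.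

Definition ffun_dec (n : nat) (d : {ffun 'I_n -> nat}) (t : 'I_n) : {ffun 'I_n -> nat} :=
  [ffun j => d j - (t == j)].

Lemma multinomS (m n : nat) (d : {ffun 'I_n -> nat}) :
  multinom m.+1 d = \sum_(t < n | 0 < d t) multinom m (ffun_dec d t).
Proof.
rewrite /multinom -sum1_card big_mkcond /= big_ffun_cons [RHS]big_mkcond /=.
apply: eq_bigr => t _; rewrite -sum1_card.
case: ifP => [dt_gt0 | dt0].
  rewrite [RHS]big_mkcond; apply: eq_bigr => g _; rewrite !inE; congr (if _ then _ else _).
  apply/eqP/eqP => /ffunP fibE; apply/ffunP => j; have := fibE j;
    rewrite !ffunE fiber_card_cons; case: eqP => [<- | _] /=; lia.
apply: big1 => g _; rewrite inE; case: eqP => // /ffunP /(_ t).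
by rewrite ffunE fiber_card_cons eqxx => dtE; rewrite -dtE in dt0.
Qed.

Lemma prod_fact_dec (n : nat) (d : {ffun 'I_n -> nat}) (t : 'I_n) : 0 < d t ->
  \prod_(j < n) (d j)`! = d t * \prod_(j < n) (ffun_dec d t j)`!.
Proof.
move=> dt_gt0; rewrite (bigD1 t) // [in RHS](bigD1 t) //= /ffun_dec ffunE eqxx.
rewrite subn1 -[in LHS](prednK dt_gt0) factS -mulnA prednK //.
by do 2 congr (_ * _); apply: eq_bigr => j jt; rewrite ffunE eq_sym (negbTE jt) subn0.
Qed.

Lemma sum_dec (n : nat) (d : {ffun 'I_n -> nat}) (t : 'I_n) : 0 < d t ->
  \sum_(j < n) ffun_dec d t j = (\sum_(j < n) d j).-1.
Proof.
move=> dt_gt0; rewrite (bigD1 t) // [in RHS](bigD1 t) //= /ffun_dec ffunE eqxx.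
rewrite subn1 -[in RHS](prednK dt_gt0) addSn /=.
by congr (_ + _); apply: eq_bigr => j jt; rewrite ffunE eq_sym (negbTE jt) subn0.
Qed.

Lemma multinom0 (n : nat) (d : {ffun 'I_n -> nat}) :
  multinom 0 d = (\sum_(j < n) d j == 0).
Proof.
have fib0 (f : {ffun 'I_0 -> 'I_n}) : fiber_cards f = [ffun=> 0].
  by apply/ffunP => j; rewrite !ffunE /fiber_card big_ord0.
have [-> | d_neq0] := eqVneq d [ffun=> 0].
  rewrite big1 => [|j _]; last by rewrite ffunE.
  rewrite /multinom (eq_card (B := predT)) ?card_ffun ?card_ord // => f.
  by rewrite inE fib0 eqxx.
have -> : (\sum_(j < n) d j == 0) = false.
  apply: contraNF d_neq0; rewrite sum_nat_eq0 => /forallP d0.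
  by apply/eqP/ffunP => j; rewrite ffunE; apply/eqP/(implyP (d0 j)).
by apply: eq_card0 => f; rewrite inE fib0 eq_sym (negbTE d_neq0).
Qed.

Lemma multinom_fact (m n : nat) (d : {ffun 'I_n -> nat}) :
  multinom m d * \prod_(j < n) (d j)`! = if \sum_(j < n) d j == m then m`! else 0.
Proof.
elim: m d => [|m IHm] d.
  rewrite multinom0; case: eqP => [/eqP | _] //.
  rewrite sum_nat_eq0 => /forallP d0.
  by rewrite big1 // => j _; rewrite (eqP (implyP (d0 j) isT)).
have sum_pos : \sum_(t < n | 0 < d t) d t = \sum_(t < n) d t.
  by rewrite big_mkcond; apply: eq_bigr => t _; case: (d t).
rewrite multinomS big_distrl /=.
under eq_bigr => t dt_gt0 do rewrite (prod_fact_dec dt_gt0) mulnCA IHm (sum_dec dt_gt0).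
rewrite -big_distrl /= sum_pos.
case: (\sum_(j < n) d j) => [|s] //=; rewrite eqSS.
by case: eqP => [-> | _]; rewrite ?muln0.
Qed.

Section KoutMaps.
Variables n k : nat.

Definition kout_of_ffun (f : {ffun 'I_(k * n) -> 'I_n}) : kout_map n k :=
  [ffun i => [ffun l => f (mxvec_index l i)]].

Lemma kout_of_ffun_bij : bijective kout_of_ffun.
Proof.
have [g gK Kg] := curry_mxvec_bij k n.
exists (fun M : kout_map n k => [ffun x => M (g x).2 (g x).1]) => [f | M].
  apply/ffunP => x; rewrite !ffunE; congr (f _).
  by rewrite -[RHS](Kg x) //; case: (g x).
by apply/ffunP => i; apply/ffunP => l; rewrite !ffunE (gK (l, i)).
Qed.

Lemma indeg_seq_kout_of_ffun (f : {ffun 'I_(k * n) -> 'I_n}) :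
  indeg_seq (kout_of_ffun f) = fiber_cards f.
Proof.
apply/ffunP => j; rewrite !ffunE /indeg /fiber_card.
rewrite (reindex _ (curry_mxvec_bij k n)) exchange_big pair_big /=.
by apply: eq_bigr => -[l i] _; rewrite !ffunE.
Qed.

Lemma card_indeg_seq_eq (d : {ffun 'I_n -> nat}) :
  #|[pred M : kout_map n k | indeg_seq M == d]| = multinom (k * n) d.
Proof.
rewrite -sum1_card (reindex _ (onW_bij _ kout_of_ffun_bij)) /=.
by rewrite /multinom -sum1_card; apply: eq_bigl => f; rewrite !inE indeg_seq_kout_of_ffun.
Qed.

End KoutMaps.

Local Open Scope ring_scope.

Lemma risingS (R : pzRingType) (x : R) (c : nat) :
  rising x c.+1 = rising x c * (x + c%:R).
Proof. by rewrite /rising big_ord_recr. Qed.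

(* Polya urn: giving g one more image t multiplies its weight by
   a + fiber_card g t, and these factors sum over t to a n + m. *)
Lemma sum_prod_rising_fiber_card (R : comPzRingType) (m n : nat) (a : R) :
  \sum_(f : {ffun 'I_m -> 'I_n}) \prod_(j < n) rising a (fiber_card f j) =
  rising (a * n%:R) m.
Proof.
elim: m => [|m IHm].
  rewrite /rising big_ord0 (eq_bigr (fun=> 1)) => [|f _]; last first.
    by apply: big1 => j _; rewrite /fiber_card big_ord0 big_ord0.
  by rewrite sumr_const card_ffun !card_ord expn0.
have cons_weight t (g : {ffun 'I_m -> 'I_n}) :
    \prod_(j < n) rising a (fiber_card (ffun_cons t g) j) =
    \prod_(j < n) rising a (fiber_card g j) * (a + (fiber_card g t)%:R).
  rewrite (bigD1 t) // [X in X * _](bigD1 t) //= fiber_card_cons eqxx risingS.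
  rewrite mulrAC; congr (_ * _ * _); apply: eq_bigr => j jt.
  by rewrite fiber_card_cons eq_sym (negbTE jt).
rewrite big_ffun_cons exchange_big /= risingS -IHm mulr_suml.
apply: eq_bigr => g _; under eq_bigr do rewrite cons_weight.
rewrite -mulr_sumr big_split /= sumr_const card_ord -natr_sum sum_fiber_card.
by rewrite mulr_natr.
Qed.

Lemma sum_prod_fiber_card (R : comPzRingType) (m n : nat) (w : nat -> R) :
  \sum_(f : {ffun 'I_m -> 'I_n}) \prod_(j < n) w (fiber_card f j) =
  \sum_(e : {ffun 'I_n -> 'I_m.+1} | \sum_(j < n) (e j : nat) == m)
     (multinom m [ffun j => e j : nat])%:R * \prod_(j < n) w (e j).
Proof.
pose cards (f : {ffun 'I_m -> 'I_n}) := [ffun j => inord (fiber_card f j) : 'I_m.+1].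
have cardsE f j : (cards f j : nat) = fiber_card f j.
  by rewrite ffunE inordK // ltnS fiber_card_le.
clearbody cards.
rewrite (partition_big cards (fun e => \sum_(j < n) (e j : nat) == m)) => [|f _]; last first.
  by rewrite (eq_bigr _ (fun j _ => cardsE f j)) sum_fiber_card.
apply: eq_bigr => e _; rewrite /multinom -sum1_card natr_sum mulr_suml.
apply: eq_big => [f | f /eqP <-]; last first.
  by rewrite mul1r; apply: eq_bigr => j _; rewrite cardsE.
rewrite inE; apply/eqP/eqP => [<- | fibE]; apply/ffunP => j.
  by rewrite !ffunE cardsE.
by apply: val_inj; rewrite /= cardsE; move/ffunP/(_ j): fibE; rewrite !ffunE.
Qed.

Lemma multinomE (R : numFieldType) (m n : nat) (d : {ffun 'I_n -> nat}) :
  (multinom m d)%:R =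
  (if \sum_(j < n) d j == m then (m`!)%:R / \prod_(j < n) ((d j)`!)%:R else 0) :> R.
Proof.
have fact_neq0 : \prod_(j < n) ((d j)`!)%:R != 0 :> R.
  by rewrite -natr_prod pnatr_eq0 -lt0n prodn_gt0 // => j; rewrite fact_gt0.
apply: (mulIf fact_neq0); rewrite -natr_prod -natrM multinom_fact.
by case: ifP; rewrite ?mul0r // natr_prod divfK.
Qed.

Lemma sum_compositions_div_fact (R : numFieldType) (m n : nat) (w : nat -> R) :
  \sum_(e : {ffun 'I_n -> 'I_m.+1} | \sum_(j < n) (e j : nat) == m)
     \prod_(j < n) (w (e j) / ((e j)`!)%:R) =
  (\sum_(f : {ffun 'I_m -> 'I_n}) \prod_(j < n) w (fiber_card f j)) / (m`!)%:R.
Proof.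
rewrite sum_prod_fiber_card mulr_suml; apply: eq_bigr => e sum_e.
set d := [ffun j => _]; have dE j : d j = e j by rewrite ffunE.
rewrite multinomE (eq_bigr _ (fun j _ => dE j)) sum_e.
rewrite (eq_bigr _ (fun j _ => congr1 (fun x => (x`!)%:R : R) (dE j))).
have fact_neq0 : (m`!)%:R != 0 :> R by rewrite pnatr_eq0 -lt0n fact_gt0.
by rewrite prodf_div [in RHS]mulrC !mulrA mulVf // mul1r mulrC.
Qed.

(* No nonvanishing hypothesis: if the normalizing sum is 0, both sides are 0
   since x / 0 = 0. *)
Lemma P_iid_cond_div_fact (R : realType) (n s : nat) (w : nat -> R)
    (d : {ffun 'I_n -> nat}) :
  P_iid_cond (fun e => w e / (e`!)%:R) s d =
  (multinom s d)%:R * \prod_(j < n) w (d j) /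
    \sum_(f : {ffun 'I_s -> 'I_n}) \prod_(j < n) w (fiber_card f j).
Proof.
rewrite /P_iid_cond /P_iid_sum /P_iid_vec sum_compositions_div_fact multinomE.
case: eqP => _; last by rewrite !mul0r.
by rewrite prodf_div invf_div; ring.
Qed.

Lemma prod_tilt (R : comPzRingType) (n : nat) (c q : R) (p : nat -> R) (e : 'I_n -> nat) :
  \prod_(j < n) (c * q ^+ e j * p (e j)) =
  c ^+ n * q ^+ (\sum_(j < n) e j) * \prod_(j < n) p (e j).
Proof. by rewrite !big_split /= prodr_const card_ord prodrXr. Qed.

Lemma P_iid_cond_tilt (R : realType) (n s : nat) (c q : R) (p p' : nat -> R)
    (d : {ffun 'I_n -> nat}) :
  c != 0 -> q ^+ s != 0 -> (forall e, p' e = c * q ^+ e * p e) ->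
  P_iid_cond p' s d = P_iid_cond p s d.
Proof.
move=> c_neq0 qs_neq0 p'E.
have tilt (e : 'I_n -> nat) : \sum_(j < n) e j = s ->
    \prod_(j < n) p' (e j) = c ^+ n * q ^+ s * \prod_(j < n) p (e j).
  by move=> <-; rewrite -prod_tilt; apply: eq_bigr => j _; rewrite p'E.
rewrite /P_iid_cond /P_iid_sum /P_iid_vec.
rewrite (eq_bigr (fun e : {ffun 'I_n -> 'I_s.+1} =>
  c ^+ n * q ^+ s * \prod_(j < n) p (e j))) => [|e /eqP]; last exact: tilt.
rewrite -mulr_sumr; case: eqP => [/tilt -> | _]; last by rewrite !mul0r.
by rewrite invfM mulrACA divff ?mul1r // mulf_neq0 // expf_neq0.
Qed.

Lemma P_D_alpha_multinom (R : realType) (n k : nat) (alpha : R) (d : {ffun 'I_n -> nat}) :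
  P_D_alpha k alpha d =
  (multinom (k * n) d)%:R * \prod_(j < n) rising alpha (d j) /
    rising (alpha * n%:R) (k * n).
Proof.
rewrite /P_D_alpha (eq_bigr (fun=>
  \prod_(j < n) rising alpha (d j) / rising (alpha * n%:R) (k * n))).
  by rewrite sumr_const card_indeg_seq_eq -[LHS]mulr_natl mulrA.
by move=> M /eqP <-; congr (_ / _); apply: eq_bigr => j _; rewrite ffunE.
Qed.

Lemma P_D_unif_multinom (R : realType) (n k : nat) (d : {ffun 'I_n -> nat}) :
  P_D_unif R k d = (multinom (k * n) d)%:R / n%:R ^+ (k * n).
Proof.
by rewrite /P_D_unif /P_map_unif sumr_const card_indeg_seq_eq -[LHS]mulr_natl mul1r.
Qed.

Unset Implicit Arguments.

Theorem lemma1 (R : realType) (n k : nat) (d : {ffun 'I_n -> nat}) :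
  (forall alpha : R, 0 < alpha ->
     P_D_alpha k alpha d = P_iid_cond (pmf_Z k alpha) (k * n) d) /\
  P_D_unif R k d = P_iid_cond (pmf_Poisson R k) (k * n) d.
Proof.
split=> [alpha alpha_gt0 | ].
  have alphak_gt0 : 0 < alpha + k%:R by rewrite ltr_wpDr.
  rewrite P_D_alpha_multinom (P_iid_cond_tilt (c := (alpha / (alpha + k%:R)) `^ alpha)
    (q := k%:R / (alpha + k%:R)) (p := fun e => rising alpha e / (e`!)%:R)).
  - by rewrite P_iid_cond_div_fact sum_prod_rising_fiber_card.
  - by rewrite gt_eqF // powR_gt0 // divr_gt0.
  - case: k alphak_gt0 => [|k'] alphak_gt0; first by rewrite mul0n expr0 oner_neq0.
    by rewrite expf_neq0 // mulf_neq0 ?invr_eq0 ?gt_eqF.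
  - by move=> e; rewrite /pmf_Z; ring.
rewrite P_D_unif_multinom (P_iid_cond_tilt (c := expR (- k%:R)) (q := k%:R)
  (p := fun e => 1 / (e`!)%:R)).
- rewrite P_iid_cond_div_fact big1 // mulr1; congr (_ / _).
  by rewrite sumr_const card_ffun !card_ord natrX.
- by rewrite gt_eqF // expR_gt0.
- case: k => [|k']; first by rewrite mul0n expr0 oner_neq0.
  by rewrite expf_neq0 // pnatr_eq0.
- by move=> e; rewrite /pmf_Poisson; ring.
Qed.
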